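(* Let $(P,\omega)$ be a labeled poset with $|P|=p$ and let $s\in P$. A function $f:P\to\mathbb{N}$ is a $(P,\omega;s)$-partition if and only if $f'$ is $w$-compatible for some $w\in\mathcal{L}(P,\omega;s)$. In other words, $$\mathcal{A}(P,\omega;s)=\dot\bigcup_{w\in\mathcal{L}(P,\omega;s)} S_w,$$ a disjoint union.
   Context: $\mathbb{N}=\{0,1,2,\dots\}$. A labeling is a bijection $\omega:P\to[p]$. A linear extension is an order-preserving bijection $g:P\to[p]$; $\mathcal{L}(P,\omega)$ is the set of words (permutations) $w=\omega\circ g^{-1}=w_1\cdots w_p$ over all linear extensions $g$, and $\mathcal{L}(P,\omega;s)$ is the set of those $w\in\mathcal{L}(P,\omega)$ with $w_p=\omega(s)$. A $(P,\omega)$-partition is a map $f:P\to\mathbb{N}$ such that $f(x)\ge f(y)$ whenever $x\le y$, and $f(x)>f(y)$ whenever $x\le y$ and $\omega(x)>\omega(y)$. A $(P,\omega;s)$-partition is a $(P,\omega)$-partition $f$ such that $f(s)\le f(t)$ for all $t\in P$, and such that $f(s)=f(t)$ for $t\neq s$ implies $\omega(s)>\omega(t)$; $\mathcal{A}(P,\omega;s)$ is the set of these. For $f:P\to\mathbb{N}$ set $f'=f\circ\omega^{-1}:[p]\to\mathbb{N}$. For a permutation $w=w_1\cdots w_p$, a function $f':[p]\to\mathbb{N}$ is $w$-compatible if $f'(w_1)\ge\cdots\ge f'(w_p)$ and $f'(w_i)>f'(w_{i+1})$ whenever $w_i>w_{i+1}$. $S_w$ is the set of all $f:P\to\mathbb{N}$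 such that $f'$ is $w$-compatible. *)

(* Labeled poset (P, omega) with P a finite partial order,
   [p] rendered as 'I_#|P| (labels 0..p-1 instead of 1..p; only their
   relative order matters). Words w = w_1 ... w_p are rendered as finite
   functions from positions 'I_#|P| (0-based) to labels 'I_#|P|. *)
From HB Require Import structures.
From mathcomp Require Import all_boot all_order.
Set Implicit Arguments. Unset Strict Implicit. Unset Printing Implicit Defensive.
Import Order.TTheory.

Section Defs.
Context {d : Order.disp_t} {P : finPOrderType d}.

Local Notation p := #|P|.

Definition labeling (omega : P -> 'I_p) : Prop := bijective omega.

Definition linear_extension (g : P -> 'I_p) : Prop :=
  bijective g /\ (forall x y : P, (x <= y)%O -> (g x <= g y)%N).

(* w = omega o g^{-1} for some linear extension g, i.e. w (g x) = omega x *)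
Definition in_L (omega : P -> 'I_p) (w : {ffun 'I_p -> 'I_p}) : Prop :=
  exists g : P -> 'I_p, linear_extension g /\ forall x : P, w (g x) = omega x.

Definition in_Ls (omega : P -> 'I_p) (s : P) (w : {ffun 'I_p -> 'I_p}) : Prop :=
  in_L omega w /\ (forall i : 'I_p, (i.+1 = p)%N -> w i = omega s).

Definition P_partition (omega : P -> 'I_p) (f : P -> nat) : Prop :=
  forall x y : P, (x <= y)%O ->
    (f y <= f x)%N /\ ((omega y < omega x)%N -> (f y < f x)%N).

Definition Ps_partition (omega : P -> 'I_p) (s : P) (f : P -> nat) : Prop :=
  P_partition omega f /\
  (forall t : P, (f s <= f t)%N) /\
  (forall t : P, t != s -> f s = f t -> (omega t < omega s)%N).

(* f' = f o omega^{-1} (omega is a bijection; the default 0 is never used) *)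
Definition fprime (omega : P -> 'I_p) (f : P -> nat) (k : 'I_p) : nat :=
  match [pick x | omega x == k] with Some x => f x | None => 0%N end.

Definition w_compatible (w : {ffun 'I_p -> 'I_p}) (f' : 'I_p -> nat) : Prop :=
  forall i j : 'I_p, (j = i.+1 :> nat) ->
    (f' (w j) <= f' (w i))%N /\ ((w j < w i)%N -> (f' (w j) < f' (w i))%N).

Definition in_S (omega : P -> 'I_p) (w : {ffun 'I_p -> 'I_p}) (f : P -> nat) : Prop :=
  w_compatible w (fprime omega f).

End Defs.

(* Order the labels by decreasing value of f', breaking ties by increasing
   label.  A permutation w makes f' w-compatible exactly when consecutive
   letters of w increase in this strict total order, i.e. when w lists the
   labels in that order; hence w is unique.  For the sorted word to lie in
   L(P, omega) the order must extend that of P, which is the (P, omega)-partition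
   condition; for it to end with omega(s), omega(s) must be the largest label,
   which is the extra condition defining a (P, omega; s)-partition. *)

From mathcomp Require Import all_boot all_order zify.
Set Implicit Arguments. Unset Strict Implicit. Unset Printing Implicit Defensive.

Section SortedStrict.
Variables (T : eqType) (lt : rel T).
Hypotheses (lt_trans : transitive lt) (lt_irr : irreflexive lt).

Lemma sorted_index_homo s :
  sorted lt s -> {in s &, forall x y, lt x y -> index x s < index y s}.
Proof.
move=> s_sorted x y xs ys lt_xy; rewrite ltnNge leq_eqVlt.
apply/negP => /orP[/eqP/(index_inj y ys xs) eq_yx | lt_idx].
  by move: lt_xy; rewrite eq_yx lt_irr.
have lt_yx := sorted_ltn_index lt_trans s_sorted _ _ ys xs lt_idx.
by move: (lt_trans lt_xy lt_yx); rewrite lt_irr.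
Qed.

End SortedStrict.

Section CodomOrd.
Variable T : eqType.

Lemma nth_codom_ord n x0 (w : 'I_n -> T) (i : 'I_n) : nth x0 (codom w) i = w i.
Proof. by rewrite codomE (nth_map i) ?size_enum_ord // nth_ord_enum. Qed.

Lemma sorted_codomP n (r : rel T) (w : 'I_n -> T) :
  reflect (forall i j : 'I_n, j = i.+1 :> nat -> r (w i) (w j)) (sorted r (codom w)).
Proof.
case: n w => [|n] w.
  have /size0nil -> : size (codom w) = 0 by rewrite size_codom card_ord.
  by apply: ReflectT => -[].
apply: (iffP (sortedP (w ord0))); rewrite size_codom card_ord => r_next.
  by move=> i j ji; move: (r_next i); rewrite -ji !(nth_codom_ord _ w) => /(_ (ltn_ord j)).
move=> i lt_in; have lt_i : i < n.+1 := ltnW lt_in.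
have /= -> := nth_codom_ord (w ord0) w (Ordinal lt_i).
have /= -> := nth_codom_ord (w ord0) w (Ordinal lt_in).
exact: r_next.
Qed.

Lemma sorted_codom_homo n (r : rel T) (w : 'I_n -> T) :
  transitive r -> sorted r (codom w) -> {homo w : i j / i < j >-> r i j}.
Proof.
move=> r_trans w_sorted i j lt_ij.
rewrite -(nth_codom_ord (w i) w i) -(nth_codom_ord (w i) w j).
by apply: sorted_ltn_nth => //; rewrite inE size_codom card_ord.
Qed.

Lemma codom_ffun_nth n x0 (s : seq T) :
  size s = n -> codom [ffun i : 'I_n => nth x0 s i] = s.
Proof.
move=> size_s; rewrite codomE (eq_map (ffunE _)).
rewrite -[map _ _]/(map (nth x0 s \o val) _) map_comp val_enum_ord -size_s.
exact: mkseq_nth.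
Qed.

End CodomOrd.

Section CompatOrder.
Variables (n : nat) (F : 'I_n -> nat).

Definition compat_lt (a b : 'I_n) := (F b < F a) || (F a == F b) && (a < b).
Definition compat_le (a b : 'I_n) := (a == b) || compat_lt a b.

Lemma compat_lt_trans : transitive compat_lt.
Proof.
move=> b a c; rewrite /compat_lt => /orP[? | /andP[/eqP ? ?]] /orP[? | /andP[/eqP ? ?]];
  apply/orP; lia.
Qed.

Lemma compat_lt_irr : irreflexive compat_lt.
Proof. by move=> a; rewrite /compat_lt !ltnn andbF. Qed.

Lemma compat_lt_total a b : a != b -> compat_lt a b || compat_lt b a.
Proof. by rewrite -(inj_eq val_inj) /compat_lt; case: (ltngtP (F a) (F b)) => //= _; lia. Qed.

Lemma compat_le_trans : transitive compat_le.
Proof.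
move=> b a c /orP[/eqP-> // | lt_ab] /orP[/eqP<- | lt_bc];
  rewrite /compat_le ?lt_ab ?orbT //.
by rewrite (compat_lt_trans lt_ab lt_bc) orbT.
Qed.

Lemma compat_le_total : total compat_le.
Proof. by move=> a b; rewrite /compat_le; case: eqVneq => //= /compat_lt_total. Qed.

Lemma compat_lt_sorted_uniq_le s : sorted compat_lt s = uniq s && sorted compat_le s.
Proof.
rewrite (sorted_pairwise compat_le_trans) (sorted_pairwise compat_lt_trans) uniq_pairwise.
rewrite -pairwise_relI; apply/eq_pairwise => a b /=; rewrite /compat_le.
by case: eqVneq => [->|_] /=; rewrite ?compat_lt_irr.
Qed.

Lemma compat_lt_compatible a b : compat_lt a b -> F b <= F a /\ (b < a -> F b < F a).
Proof. by rewrite /compat_lt => /orP[? | /andP[/eqP ? ?]]; split; lia. Qed.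

Lemma compatible_compat_lt a b :
  a != b -> F b <= F a -> (b < a -> F b < F a) -> compat_lt a b.
Proof. rewrite -(inj_eq val_inj) /compat_lt => /= ne_ab le_ba lt_ba; apply/orP; lia. Qed.

Definition compat_sort := sort compat_le (enum 'I_n).

Lemma mem_compat_sort a : a \in compat_sort.
Proof. by rewrite mem_sort mem_enum. Qed.

Lemma size_compat_sort : size compat_sort = n.
Proof. by rewrite size_sort size_enum_ord. Qed.

Lemma compat_sort_sorted : sorted compat_lt compat_sort.
Proof.
by rewrite compat_lt_sorted_uniq_le sort_uniq enum_uniq (sort_sorted compat_le_total).
Qed.

Definition compat_word (x0 : 'I_n) : {ffun 'I_n -> 'I_n} :=
  [ffun i : 'I_n => nth x0 compat_sort i].

Lemma codom_compat_word x0 : codom (compat_word x0) = compat_sort.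
Proof. exact/codom_ffun_nth/size_compat_sort. Qed.

End CompatOrder.

Section LabeledPoset.
Context {d : Order.disp_t} {P : finPOrderType d}.
Local Notation p := #|P|.
Variables (omega : P -> 'I_p) (s : P).
Hypothesis homega : labeling omega.

Let omega_inj : injective omega := bij_inj homega.

Lemma fprimeE (f : P -> nat) (x : P) : fprime omega f (omega x) = f x.
Proof.
rewrite /fprime; case: pickP => [y /eqP/omega_inj -> // | no_preimage].
by move: (no_preimage x); rewrite eqxx.
Qed.

Lemma w_compatible_sorted (F : 'I_p -> nat) (w : {ffun 'I_p -> 'I_p}) :
  injective w -> w_compatible w F -> sorted (compat_lt F) (codom w).
Proof.
move=> w_inj w_compat; apply/sorted_codomP => i j ji.
have [le_ji lt_ji] := w_compat i j ji.
by apply: compatible_compat_lt; rewrite // (inj_eq w_inj) -(inj_eq val_inj) /= ji ltn_eqF.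
Qed.

Lemma sorted_w_compatible (F : 'I_p -> nat) (w : {ffun 'I_p -> 'I_p}) :
  sorted (compat_lt F) (codom w) -> w_compatible w F.
Proof. by move/sorted_codomP=> w_sorted i j /w_sorted/compat_lt_compatible. Qed.

Lemma extension_word_inj (w : {ffun 'I_p -> 'I_p}) (g : P -> 'I_p) :
  bijective g -> (forall x, w (g x) = omega x) -> injective w.
Proof.
case=> g' gK g'K w_g i j eq_wij.
by rewrite -(g'K i) -(g'K j); congr g; apply: omega_inj; rewrite -!w_g !g'K.
Qed.

Lemma in_S_compat_lt (f : P -> nat) (w : {ffun 'I_p -> 'I_p}) (g : P -> 'I_p) :
  bijective g -> (forall x, w (g x) = omega x) -> in_S omega w f ->
  forall x y, g x < g y -> compat_lt (fprime omega f) (omega x) (omega y).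
Proof.
move=> g_bij w_g w_compat x y; rewrite -!w_g; apply: sorted_codom_homo.
  exact: compat_lt_trans.
exact: w_compatible_sorted (extension_word_inj g_bij w_g) w_compat.
Qed.

Lemma in_S_Ps_partition (f : P -> nat) (w : {ffun 'I_p -> 'I_p}) :
  in_Ls omega s w -> in_S omega w f -> Ps_partition omega s f.
Proof.
case=> -[g [[g_bij g_mono] w_g]] w_last w_compat.
have w_inj := extension_word_inj g_bij w_g.
have lt_g := in_S_compat_lt g_bij w_g w_compat.
have g_neq x y : (g x != g y :> nat) = (x != y).
  by rewrite (inj_eq val_inj) (inj_eq (bij_inj g_bij)).
have g_last t : t != s -> g t < g s.
  have p_gt0 : 0 < p by apply/card_gt0P; exists s.
  have gs_last : (g s).+1 = p.
    have last_lt : p.-1 < p by rewrite ltn_predL.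
    have := w_last (Ordinal last_lt) (prednK p_gt0); rewrite -w_g => /w_inj <- /=.
    exact: prednK.
  by move=> ne_ts; rewrite ltn_neqAle g_neq ne_ts -ltnS gs_last ltn_ord.
split; [|split].
- move=> x y le_xy; have [<-|ne_xy] := eqVneq x y; first by rewrite leqnn ltnn.
  have /lt_g/compat_lt_compatible : g x < g y by rewrite ltn_neqAle g_neq ne_xy g_mono.
  by rewrite !fprimeE.
- move=> t; have [->//|ne_ts] := eqVneq t s.
  by have [] := compat_lt_compatible (lt_g _ _ (g_last t ne_ts)); rewrite !fprimeE.
- move=> t ne_ts eq_st; have := lt_g _ _ (g_last t ne_ts).
  by rewrite /compat_lt !fprimeE eq_st ltnn eqxx.
Qed.

Lemma P_partition_compat_lt (f : P -> nat) (x y : P) :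
  P_partition omega f -> (x <= y)%O -> x != y ->
  compat_lt (fprime omega f) (omega x) (omega y).
Proof.
move=> f_part le_xy ne_xy; have [le_f lt_f] := f_part x y le_xy.
by apply: compatible_compat_lt; rewrite ?fprimeE ?(inj_eq omega_inj).
Qed.

Lemma Ps_partition_compat_lt_max (f : P -> nat) (a : 'I_p) :
  Ps_partition omega s f -> a != omega s -> compat_lt (fprime omega f) a (omega s).
Proof.
case=> _ [f_min f_tie]; case: homega => omega' _ omega'K.
rewrite -(omega'K a) (inj_eq omega_inj) /compat_lt !fprimeE => ne_ts.
have := f_min (omega' a); rewrite leq_eqVlt => /orP[/eqP eq_st | -> //].
by rewrite eq_st ltnn eqxx f_tie.
Qed.

Lemma compat_word_in_L (f : P -> nat) :
  P_partition omega f -> in_L omega (compat_word (fprime omega f) (omega s)).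
Proof.
move=> f_part; set F := fprime omega f; set w := compat_word F (omega s).
have index_lt x : index (omega x) (compat_sort F) < p.
  by have := index_mem (omega x) (compat_sort F); rewrite size_compat_sort mem_compat_sort.
pose g x := Ordinal (index_lt x).
have w_g x : w (g x) = omega x by rewrite ffunE nth_index ?mem_compat_sort.
exists g; split=> //; split.
  apply: inj_card_bij; last by rewrite card_ord.
  by move=> x y /(congr1 w); rewrite !w_g => /omega_inj.
move=> x y le_xy; have [->//|ne_xy] := eqVneq x y.
have index_homo := sorted_index_homo (@compat_lt_trans _ F) (@compat_lt_irr _ F)
  (compat_sort_sorted F).
apply/ltnW/index_homo; rewrite ?mem_compat_sort //.
exact: P_partition_compat_lt.
Qed.

Lemma compat_word_last (f : P -> nat) :
  Ps_partition omega s f ->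
  forall i : 'I_p, i.+1 = p -> compat_word (fprime omega f) (omega s) i = omega s.
Proof.
move=> f_part i i_last; set F := fprime omega f.
have sort_sorted := compat_sort_sorted F.
have sort_uniq := sorted_uniq (@compat_lt_trans _ F) (@compat_lt_irr _ F) sort_sorted.
rewrite ffunE; apply/eqP/contraT => /(Ps_partition_compat_lt_max f_part).
move/(sorted_index_homo (@compat_lt_trans _ F) (@compat_lt_irr _ F) sort_sorted).
rewrite !mem_compat_sort index_uniq ?size_compat_sort // => /(_ isT isT).
by have := index_mem (omega s) (compat_sort F); rewrite mem_compat_sort size_compat_sort; lia.
Qed.

Lemma Ps_partition_in_S (f : P -> nat) :
  Ps_partition omega s f -> exists w, in_Ls omega s w /\ in_S omega w f.
Proof.
move=> f_part; exists (compat_word (fprime omega f) (omega s)); split; first split.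
- exact/compat_word_in_L/f_part.1.
- exact: compat_word_last.
- by apply: sorted_w_compatible; rewrite codom_compat_word compat_sort_sorted.
Qed.

Lemma in_S_uniq (f : P -> nat) (w1 w2 : {ffun 'I_p -> 'I_p}) :
  in_L omega w1 -> in_L omega w2 -> in_S omega w1 f -> in_S omega w2 f -> w1 = w2.
Proof.
case=> [g1 [[g1_bij _] w1_g]] [g2 [[g2_bij _] w2_g]] w1_compat w2_compat.
have w1_inj := extension_word_inj g1_bij w1_g.
have w2_inj := extension_word_inj g2_bij w2_g.
apply/(can_inj fgraphK)/val_inj; rewrite /= -!codom_ffun.
apply: (irr_sorted_eq (@compat_lt_trans _ _) (@compat_lt_irr _ _)).
- exact: w_compatible_sorted w1_compat.
- exact: w_compatible_sorted w2_compat.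
- by move=> a; rewrite !injF_onto.
Qed.

End LabeledPoset.

Theorem lemma3p2 (d : Order.disp_t) (P : finPOrderType d)
  (omega : P -> 'I_#|P|) (homega : labeling omega) (s : P) :
  (forall f : P -> nat,
     Ps_partition omega s f <->
     exists w : {ffun 'I_#|P| -> 'I_#|P|}, in_Ls omega s w /\ in_S omega w f) /\
  (forall (w1 w2 : {ffun 'I_#|P| -> 'I_#|P|}) (f : P -> nat),
     in_Ls omega s w1 -> in_Ls omega s w2 ->
     in_S omega w1 f -> in_S omega w2 f -> w1 = w2).
Proof.
split=> [f | w1 w2 f [w1_L _] [w2_L _]]; last exact: in_S_uniq w1_L w2_L.
split; first exact: Ps_partition_in_S.
by case=> w [w_Ls w_S]; exact: in_S_Ps_partition w_Ls w_S.
Qed.
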